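(* Let $G$ be a nilpotent group of class $c$ and of odd order, and let $n=\lceil c/2\rceil$. Then for every $x\in\gamma_n(G)$ and $g\in G$, the order of the element $x\otimes g\in G\otimes G$ divides $\exp(\gamma_n(G))$.
   Context: $\gamma_n(G)$ is the $n$-th term of the lower central series. Conventions: ${}^g h = ghg^{-1}$. The nonabelian tensor square $G\otimes G$ is generated by symbols $g\otimes h$ subject to $gg'\otimes h=({}^g g'\otimes {}^g h)(g\otimes h)$ and $g\otimes hh'=(g\otimes h)({}^h g\otimes {}^h h')$. *)

From mathcomp Require Import all_boot all_fingroup all_solvable.
Set Implicit Arguments. Unset Strict Implicit. Unset Printing Implicit Defensive.

(* An abstract (possibly infinite) group, used as a test target for the
   universal property defining the nonabelian tensor square. *)
Record absGroup := AbsGroup {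
  acar :> Type;
  amul : acar -> acar -> acar;
  aone : acar;
  ainv : acar -> acar;
  amulA : forall a b c, amul a (amul b c) = amul (amul a b) c;
  amul1g : forall a, amul aone a = a;
  amulVg : forall a, amul (ainv a) a = aone
}.

Fixpoint apow (H : absGroup) (a : H) (k : nat) : H :=
  match k with 0 => aone H | k'.+1 => amul a (apow a k') end.

(* Left conjugation  ^g h = g h g^-1 (paper's convention); in MathComp,
   h ^ y = y^-1 h y, so ^g h = h ^ g^-1. *)
Definition lconj (gT : finGroupType) (g h : gT) : gT := (h ^ g^-1)%g.

Definition tensor_pairing (gT : finGroupType) (G : {set gT}) (H : absGroup)
    (f : gT -> gT -> H) : Prop :=
  (forall g g' h, g \in G -> g' \in G -> h \in G ->
     f (g * g')%g h = amul (f (lconj g g') (lconj g h)) (f g h)) /\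
  (forall g h h', g \in G -> h \in G -> h' \in G ->
     f g (h * h')%g = amul (f g h) (f (lconj h g) (lconj h h'))).

(* G (x) G is the group presented by the symbols g (x) h and the relations
   above, so (g (x) h)^e = 1 there iff for every group H and every map
   f satisfying the relations, f g h ^ e = 1 (universal property of a
   presentation). *)
Definition tensor_order_dvd (gT : finGroupType) (G : {set gT}) (g h : gT)
    (e : nat) : Prop :=
  forall (H : absGroup) (f : gT -> gT -> H),
    tensor_pairing G f -> apow (f g h) e = aone H.

From mathcomp Require Import all_boot all_fingroup all_solvable.
Set Implicit Arguments. Unset Strict Implicit. Unset Printing Implicit Defensive.

(* Let A = gamma_n(G). Since 2n >= c, the three subgroup lemma gives
   [A, [A, G]] <= gamma_(2n+1)(G) = 1, so d = x g x^-1 g^-1 centralises x and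
   y = g x g^-1, and x^k conjugates g to d^k g. Expanding with the defining
   relations, x^k (x) g = (x (x) g)^k (y (x) d)^(k(k-1)/2), where x (x) g and
   y (x) d commute. For odd e with x^e = 1, e divides e(e-1)/2 and
   (y (x) d)^e = y^e (x) d = 1, whence (x (x) g)^e = 1. *)

Local Open Scope group_scope.

Section AbsGroupTheory.

Variable H : absGroup.
Implicit Types a b c : H.

Lemma amulgV a : amul a (ainv a) = aone H.
Proof.
rewrite -[amul a _]amul1g -(amulVg (ainv a)) -amulA (amulA (ainv a)) amulVg.
by rewrite amul1g amulVg.
Qed.

Lemma amulg1 a : amul a (aone H) = a.
Proof. by rewrite -(amulVg a) amulA amulgV amul1g. Qed.

Lemma amulIl a : injective (amul a).
Proof. by move=> b c e; rewrite -(amul1g b) -(amul1g c) -(amulVg a) -!amulA e. Qed.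

Lemma amulIr a : injective (fun b => amul b a).
Proof. by move=> b c /= e; rewrite -(amulg1 b) -(amulg1 c) -(amulgV a) !amulA e. Qed.

Lemma apowD a m n : apow a (m + n) = amul (apow a m) (apow a n).
Proof. by elim: m => [|m IH] /=; rewrite ?amul1g // IH amulA. Qed.

Lemma apowM a m n : apow a (m * n) = apow (apow a m) n.
Proof. by elim: n => [|n IH]; rewrite ?muln0 // mulnS apowD IH. Qed.

Lemma apow1g n : apow (aone H) n = aone H.
Proof. by elim: n => [|n IH] //=; rewrite IH amul1g. Qed.

Definition acommute a b := amul a b = amul b a.

Lemma acommute_sym a b : acommute a b -> acommute b a.
Proof. by []. Qed.

Lemma acommuteX a b n : acommute a b -> acommute a (apow b n).
Proof.
rewrite /acommute => cab; elim: n => [|n IH] /=; first by rewrite amulg1 amul1g.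
by rewrite amulA cab -amulA IH amulA.
Qed.

Lemma acommuteXX a b m n : acommute a b -> acommute (apow a m) (apow b n).
Proof. by move=> cab; apply/acommuteX/acommute_sym/acommuteX. Qed.

End AbsGroupTheory.

Section LeftConjugation.

Variable gT : finGroupType.
Implicit Types u v w : gT.

Lemma lconjE u v : lconj u v = u * v * u^-1.
Proof. by rewrite /lconj conjgE invgK mulgA. Qed.

Lemma lconj1 v : lconj 1 v = v.
Proof. by rewrite /lconj invg1 conjg1. Qed.

Lemma lconjM u v w : lconj u (lconj v w) = lconj (u * v) w.
Proof. by rewrite /lconj -conjgM invgM. Qed.

Lemma lconjMg u v w : lconj u (v * w) = lconj u v * lconj u w.
Proof. by rewrite /lconj conjMg. Qed.

Lemma lconjXg u v k : lconj u (v ^+ k) = lconj u v ^+ k.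
Proof. by rewrite /lconj conjXg. Qed.

Lemma lconj_id u v : commute u v -> lconj u v = v.
Proof. by move=> cuv; rewrite lconjE cuv mulgK. Qed.

Lemma lconjVK u v : lconj u (lconj u^-1 v) = v.
Proof. by rewrite lconjM mulgV lconj1. Qed.

Lemma groupLconj (G : {group gT}) u v : u \in G -> (lconj u v \in G) = (v \in G).
Proof. by move=> uG; rewrite /lconj groupJr ?groupV. Qed.

End LeftConjugation.

Section TensorPairing.

Variables (gT : finGroupType) (G : {group gT}) (H : absGroup) (f : gT -> gT -> H).
Hypothesis fP : tensor_pairing G f.

Lemma pairing1g h : h \in G -> f 1 h = aone H.
Proof.
have [fMl _] := fP; move=> hG.
have := fMl 1 1 h (group1 G) (group1 G) hG.
by rewrite mulg1 !lconj1 -{1}[f 1 h]amul1g => /amulIr <-.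
Qed.

Lemma pairingg1 g : g \in G -> f g 1 = aone H.
Proof.
have [_ fMr] := fP; move=> gG.
have := fMr g 1 1 gG (group1 G) (group1 G).
by rewrite mulg1 !lconj1 -{1}[f g 1]amulg1 => /amulIl <-.
Qed.

Lemma pairingXl a b k : a \in G -> b \in G -> commute a b ->
  f (a ^+ k) b = apow (f a b) k.
Proof.
have [fMl _] := fP; move=> aG bG cab.
elim: k => [|k IH]; first by rewrite expg0 pairing1g.
rewrite expgSr fMl ?groupX // lconj_id; last exact/commute_sym/commuteX.
by rewrite lconj_id ?IH //; apply/commute_sym/commuteX/commute_sym.
Qed.

Lemma pairingXr a b k : a \in G -> b \in G -> commute a b ->
  f a (b ^+ k) = apow (f a b) k.
Proof.
have [_ fMr] := fP; move=> aG bG cab.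
elim: k => [|k IH]; first by rewrite expg0 pairingg1.
rewrite expgS fMr ?groupX // lconj_id; last exact: commute_sym.
by rewrite lconj_id ?IH //; apply: commuteX.
Qed.

(* Both sides come from expanding f (a b) (c d) by the two relations in either order. *)
Lemma pairing_lconj_exchange a b c d : a \in G -> b \in G -> c \in G -> d \in G ->
  amul (f (lconj (a * c) b) (lconj (a * c) d)) (f a c) =
  amul (f a c) (f (lconj (c * a) b) (lconj (c * a) d)).
Proof.
have [fMl fMr] := fP; move=> aG bG cG dG.
have LG u v : u \in G -> v \in G -> lconj u v \in G by move=> uG; rewrite groupLconj.
have := fMl a b (c * d) aG bG (groupM cG dG).
rewrite fMr ?groupM // fMl // [in X in _ = X -> _]fMr //.
rewrite [lconj c (a * b)]lconjMg [lconj a (c * d)]lconjMg.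
rewrite [f (lconj c a * _) _]fMl ?LG // [f _ (lconj a c * _)]fMr ?LG //.
rewrite !lconjM.
have -> : lconj c a * c = c * a by rewrite lconjE mulgKV.
have -> : lconj a c * a = a * c by rewrite lconjE mulgKV.
by rewrite -!amulA => /amulIl; rewrite !amulA => /amulIr.
Qed.

End TensorPairing.

Section OddPowerOfPairing.

Variables (gT : finGroupType) (G A : {group gT}) (H : absGroup) (f : gT -> gT -> H).
Hypotheses (fP : tensor_pairing G f) (nsAG : A <| G) (cAGA : [~: A, G] \subset 'C(A)).
Variables x g : gT.
Hypotheses (xA : x \in A) (gG : g \in G).

Let d := [~ x^-1, g^-1].
Let y := lconj g x.

Let sAG : A \subset G. Proof. exact: normal_sub nsAG. Qed.
Let xG : x \in G. Proof. exact: subsetP sAG x xA. Qed.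
Let dG : d \in G. Proof. by rewrite groupR ?groupV. Qed.
Let yA : y \in A.
Proof. by rewrite /y /lconj memJ_norm ?(subsetP (normal_norm nsAG)) ?groupV. Qed.
Let yG : y \in G. Proof. exact: subsetP sAG y yA. Qed.

Let commute_d z : z \in A -> commute z d.
Proof.
move=> zA; have dC : d \in 'C(A) by apply/(subsetP cAGA)/mem_commg; rewrite ?groupV.
exact/commute_sym/(centP dC).
Qed.

Lemma lconjXl_commg k : lconj (x ^+ k) g = d ^+ k * g.
Proof.
elim: k => [|k IH]; first by rewrite expg0 lconj1 mul1g.
rewrite expgS -lconjM IH lconjMg lconj_id; last exact/commuteX/commute_d.
rewrite expgSr -mulgA; congr (_ * _).
by rewrite lconjE /d /commg /conjg !invgK !mulgA mulgKV.
Qed.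

Lemma pairing_pow_right k : f x (d ^+ k * g) = amul (f x g) (apow (f y d) k).
Proof.
have [_ fMr] := fP.
have -> : d ^+ k * g = g * lconj g^-1 (d ^+ k) by rewrite lconjE invgK !mulgA mulgV mul1g.
rewrite fMr ?groupLconj ?groupV ?groupX ?xG ?dG // lconjVK -/y.
by rewrite (pairingXr fP k yG dG (commute_d yA)).
Qed.

Lemma pairing_commute : acommute (f x g) (f y d).
Proof.
have dxg z : lconj (x * g) (lconj (g * x)^-1 z) = lconj d z.
  by rewrite lconjM; congr lconj; rewrite /d /commg /conjg !invgK invgM !mulgA.
have gxVG : (g * x)^-1 \in G by rewrite groupV groupM ?xG.
have y'G : lconj (g * x)^-1 y \in G by rewrite groupLconj ?yG.
have d'G : lconj (g * x)^-1 d \in G by rewrite groupLconj ?dG.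
have := pairing_lconj_exchange fP xG y'G gG d'G.
rewrite !dxg !lconjVK (lconj_id (commute_refl d)) lconj_id; last first.
  exact/commute_sym/commute_d.
by move/esym.
Qed.

Lemma pairing_pow_left k :
  f (x ^+ k) g = amul (apow (f x g) k) (apow (f y d) 'C(k, 2)).
Proof.
have [fMl _] := fP.
elim: k => [|k IH]; first by rewrite expg0 (pairing1g fP) //= amul1g.
rewrite expgSr fMl ?groupX ?xG // lconj_id; last exact/commute_sym/commuteX.
rewrite lconjXl_commg pairing_pow_right IH binS bin1 apowD /=.
have cuT : acommute (apow (f y d) k) (apow (f x g) k).
  exact/acommuteXX/acommute_sym/pairing_commute.
have cuu : acommute (apow (f y d) k) (apow (f y d) 'C(k, 2)) by apply: acommuteXX.
by rewrite -!amulA (amulA (apow _ k)) cuT -amulA cuu.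
Qed.

Lemma pairing_exp_odd e : odd e -> x ^+ e = 1 -> apow (f x g) e = aone H.
Proof.
move=> oddE xe1; have := pairing_pow_left e.
have [m defE] : exists m, e = m.*2.+1.
  by exists e./2; rewrite -{1}(odd_double_half e) oddE.
have -> : 'C(e, 2) = (e * m)%N by rewrite bin2 {2}defE /= -doubleMr doubleK.
have ye1 : y ^+ e = 1 by rewrite /y -lconjXg xe1 /lconj conj1g.
rewrite apowM -(pairingXl fP e yG dG (commute_d yA)) ye1 xe1.
by rewrite !(pairing1g fP) ?dG // apow1g amulg1.
Qed.

End OddPowerOfPairing.

Lemma tensor_order_dvd_odd (gT : finGroupType) (G A : {group gT}) x g e :
    A <| G -> [~: A, G] \subset 'C(A) -> x \in A -> g \in G ->
  odd e -> x ^+ e = 1 -> tensor_order_dvd G x g e.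
Proof.
by move=> nsAG cAGA xA gG oddE xe1 H f fP; apply: (pairing_exp_odd fP nsAG cAGA).
Qed.

Lemma three_subgroup_mod (gT : finGroupType) (G N A B C : {group gT}) :
    N <| G -> A \subset G -> B \subset G -> C \subset G ->
  [~: A, B, C] \subset N -> [~: B, C, A] \subset N -> [~: C, A, B] \subset N.
Proof.
move=> nsNG sAG sBG sCG.
have nNG (X : {set gT}) : X \subset G -> X \subset 'N(N).
  by move/subset_trans; apply; apply: normal_norm.
have nRN (X Y : {group gT}) :
    X \subset 'N(N) -> Y \subset 'N(N) -> [~: X, Y] \subset 'N(N).
  exact: comm_subG.
rewrite -!(quotient_sub1 (nRN _ _ (nRN _ _ _ _) _)) ?nNG // !quotientR ?nRN ?nNG //.
move=> /trivgP ABC1 /trivgP BCA1; apply/trivgP.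
exact: (three_subgroup ABC1 BCA1).
Qed.

Lemma lcn_commg (gT : finGroupType) (G : {group gT}) i j :
  [~: 'L_i.+1(G), 'L_j.+1(G)] \subset 'L_(i + j).+2(G).
Proof.
elim: i j => [|i IH] j; first by rewrite add0n commGC lcnSnS.
rewrite lcnSn addSn.
apply: (three_subgroup_mod (lcn_normal _ G)); rewrite ?lcn_sub //.
- by rewrite (commGC G) -lcnSn commGC -addnS IH.
- by rewrite (commGC _ 'L_i.+1(G)); apply: (commSg _ (IH j)).
Qed.

Lemma commg_lcn_cent (gT : finGroupType) (G : {group gT}) n :
  nilpotent G -> nil_class G <= n.*2 -> [~: 'L_n(G), G] \subset 'C('L_n(G)).
Proof.
move=> nilG; case: n => [|m] cG.
  have /eqP-> : G :==: 1 by rewrite -nil_class0 -leqn0.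
  by rewrite comm1G sub1G.
have Lc1 : 'L_(nil_class G).+1(G) = 1 by apply/lcn_nil_classP.
rewrite -lcnSn; apply/commG1P/trivgP; rewrite -Lc1.
apply: subset_trans (lcn_commg G m.+1 m) (lcn_sub_leq _ _).
by rewrite ltnS -addnS addnn.
Qed.

Theorem lemma5p2 (gT : finGroupType) (G : {group gT}) (c : nat) :
  nilpotent G -> nil_class G = c -> odd (#|G|)%N ->
  let n := uphalf c in
  forall x g, x \in 'L_n(G) -> g \in G ->
    tensor_order_dvd G x g (exponent 'L_n(G)).
Proof.
move=> nilG <- oddG n x g xL gG.
apply: tensor_order_dvd_odd (lcn_normal n G) _ xL gG _ (expg_exponent xL).
- by apply: commg_lcn_cent nilG _; rewrite -leq_uphalf_double.
- exact: dvdn_odd (exponent_dvdn _) (dvdn_odd (cardSg (lcn_sub n G)) oddG).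
Qed.
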